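(* Let $m,a,b$ be positive integers with $(3m+1)/2\le a<b\le (5m-1)/3$. Let $A=\{a,b\}$ and assume that the nine integers $$a,\ b,\ 2a,\ a+b,\ 2b,\ 3a,\ 2a+b,\ a+2b,\ 3b$$ are pairwise distinct modulo $m$. Let $S=\langle m,a,b\rangle_{4m}$. Then $S$ has conductor $c=4m$ and $W_0(S)=-1$.
   Context: $\mathbb N=\{0,1,2,\dots\}$; $[x,y]=\{z\in\mathbb Z: x\le z\le y\}$. For positive integers $a_1,\dots,a_n,t$, $\langle a_1,\dots,a_n\rangle_t=(\mathbb N a_1+\dots+\mathbb N a_n)\cup\{z\in\mathbb Z: z\ge t\}$; this is a numerical semigroup. A numerical semigroup is a submonoid $S\subseteq\mathbb N$ with $\mathbb N\setminus S$ finite; multiplicity $m=\min(S\setminus\{0\})$; conductor $c=1+\max(\mathbb Z\setminus S)$; $q=\lceil c/m\rceil$, $\rho=qm-c$. Let $S^*=S\setminus\{0\}$, $D=S^*+S^*$, $P=S^*\setminus D$ (primitive elements), $L=S\cap[0,c-1]$, $D_q=D\cap[c,c+m-1]$, and $W_0(S)=|P\cap L|\,|L|-q|D_q|+\rho$. *)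

From mathcomp Require Import all_boot all_order all_algebra.
Set Implicit Arguments. Unset Strict Implicit. Unset Printing Implicit Defensive.

Fixpoint rep (gens : seq nat) (z : nat) : bool :=
  match gens with
  | [::] => z == 0
  | g :: gs => [exists k : 'I_z.+1, (k * g <= z) && rep gs (z - k * g)]
  end.

(* <a_1,...,a_n>_t = (N a_1 + ... + N a_n) U {z >= t}, as a predicate on nat. *)
Definition gsg (gens : seq nat) (t : nat) : pred nat :=
  fun z => rep gens z || (t <= z).

(* A numerical semigroup S is handled together with a bound T such that every
   z >= T lies in S (for <..>_t take T = t).  Under that hypothesis
   conductor S T = 1 + max (Z \ S)  (max over the finitely many gaps;
   negative integers are never in S, so the value is 0 when S = N). *)
Definition conductor (S : pred nat) (T : nat) : nat :=
  \max_(z < T | ~~ S z) z.+1.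

(* multiplicity = min (S \ {0}); T is in S, so the min is taken over [1, T]. *)
Definition multiplicity (S : pred nat) (T : nat) : nat :=
  \big[minn/T]_(1 <= z < T.+1 | S z) z.

Definition inD (S : pred nat) (z : nat) : bool :=
  [exists x : 'I_z.+1, [&& 0 < x, x < z, S x & S (z - x)]].

Definition inP (S : pred nat) (z : nat) : bool :=
  [&& 0 < z, S z & ~~ inD S z].

Definition q_of (S : pred nat) (T : nat) : nat :=
  let c := conductor S T in let m := multiplicity S T in (c + m - 1) %/ m.

Definition rho_of (S : pred nat) (T : nat) : nat :=
  q_of S T * multiplicity S T - conductor S T.

(* W_0(S) = |P ∩ L| |L| - q |D_q| + rho, with L = S ∩ [0,c-1],
   D_q = D ∩ [c, c+m-1]. *)
Definition W0 (S : pred nat) (T : nat) : int :=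
  let c := conductor S T in
  let m := multiplicity S T in
  let L := count S (iota 0 c) in
  let PL := count (inP S) (iota 0 c) in
  let Dq := count (inD S) (iota c m) in
  (PL * L)%:Z - (q_of S T * Dq)%:Z + (rho_of S T)%:Z.

From mathcomp Require Import all_boot all_order all_algebra.
From mathcomp Require Import zify.
Import Order.TTheory GRing.Theory.

(* Since 3a > 4m, an element i m + j a + k b of S below 4m has j + k <= 2 and
   i <= 3, so S ∩ [0, 4m) is the explicit 13-element set [small_elts]; in
   particular 4m - 1 is a gap (c = 4m), the multiplicity is m (so q = 4 and
   rho = 0) and, every nonzero element below 4m being at least m, the
   primitive elements below c are m, a and b.  The sums of two nonzero
   elements landing in [4m, 5m) are the ten values [window_sums]; they are
   pairwise distinct except possibly for 3a = b + 3m or 3b = a + 3m, which the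
   residue hypothesis excludes.  Hence W_0(S) = 3 * 13 - 4 * 10 + 0 = -1. *)

Lemma rep_cons g gs z :
  rep (g :: gs) z <-> exists k, k * g <= z /\ rep gs (z - k * g).
Proof.
split=> [/existsP [k /andP [kg_le rep_rest]] | [k [kg_le rep_rest]]].
  by exists k.
apply/existsP; have [g0 | g_gt0] := posnP g.
  by exists ord0; rewrite /= mul0n subn0; rewrite g0 muln0 subn0 in rep_rest.
have k_lt : k < z.+1 by nia.
by exists (Ordinal k_lt); apply/andP.
Qed.

Lemma rep3P g1 g2 g3 z :
  rep [:: g1; g2; g3] z <-> exists i j k, z = i * g1 + j * g2 + k * g3.
Proof.
split.
  move/rep_cons => [i [le_i /rep_cons [j [le_j /rep_cons [k [le_k /eqP rest0]]]]]].
  by exists i, j, k; lia.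
move=> [i [j [k ->]]].
apply/rep_cons; exists i; split; first lia.
apply/rep_cons; exists j; split; first lia.
apply/rep_cons; exists k; split; first lia.
by apply/eqP; lia.
Qed.

Lemma inD_intro (S : pred nat) z x : 0 < x < z -> S x -> S (z - x) -> inD S z.
Proof.
move=> /andP [x_gt0 x_lt] Sx Szx; have x_lt' : x < z.+1 by lia.
by apply/existsP; exists (Ordinal x_lt'); rewrite /= x_gt0 x_lt Sx Szx.
Qed.

Lemma count_iota_mem (p : pred nat) lo n s :
  (forall z, lo <= z < lo + n -> p z = (z \in s)) -> uniq s ->
  all (fun z => lo <= z < lo + n) s -> count p (iota lo n) = size s.
Proof.
move=> p_s s_uniq s_range.
rewrite (@eq_in_count _ _ (mem s)); last by move=> z; rewrite mem_iota => /p_s.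
rewrite -size_filter; apply/perm_size/uniq_perm => //; first exact/filter_uniq/iota_uniq.
move=> z; rewrite mem_filter mem_iota andb_idr // => zs.
exact: (allP s_range).
Qed.

Lemma conductor_last_gap (S : pred nat) T :
  0 < T -> ~~ S T.-1 -> conductor S T = T.
Proof.
move=> T_gt0 gap; apply/eqP; rewrite eqn_leq; apply/andP; split.
  by apply/bigmax_leqP => i _; exact: ltn_ord.
have last_lt : T.-1 < T by rewrite prednK.
have := @leq_bigmax_cond _ (fun i : 'I_T => ~~ S i) (fun i => i.+1) (Ordinal last_lt) gap.
by rewrite /= prednK.
Qed.

Lemma multiplicity_least (S : pred nat) T x :
  0 < x <= T -> S x -> (forall z, 0 < z < x -> ~~ S z) -> multiplicity S T = x.
Proof.
move=> /andP [x_gt0 x_le] Sx below_x; apply/eqP; rewrite eqn_leq; apply/andP; split.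
  have := @ge_bigmin_seq _ nat nat (index_iota 1 T.+1) T x S id.
  by rewrite minEnat mem_index_iota x_gt0 ltnS x_le; apply.
rewrite /multiplicity big_seq_cond.
have := @le_bigmin _ nat nat (index_iota 1 T.+1) id T x
  [pred i | (i \in index_iota 1 T.+1) && S i].
rewrite minEnat; apply=> // z /andP [+ Sz]; rewrite mem_index_iota => /andP [z_gt0 _].
rewrite leEnat leqNgt; apply: contraL Sz => z_lt.
by apply: below_x; rewrite z_gt0.
Qed.

Lemma q_of_conductor_mul (S : pred nat) T k :
  0 < multiplicity S T -> conductor S T = k * multiplicity S T -> q_of S T = k.
Proof.
move=> m_gt0 c_eq; rewrite /q_of c_eq -addnBA // divnMDl // divn_small ?addn0 //.
by rewrite subn1 ltn_predL.
Qed.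

Lemma rho_of_conductor_mul (S : pred nat) T k :
  0 < multiplicity S T -> conductor S T = k * multiplicity S T -> rho_of S T = 0.
Proof. by move=> m_gt0 c_eq; rewrite /rho_of (q_of_conductor_mul _ _ _ m_gt0 c_eq) c_eq subnn. Qed.

Lemma residues_rule_out_collisions m a b :
  uniq [seq x %% m | x <- [:: a; b; 2 * a; a + b; 2 * b; 3 * a;
                             2 * a + b; a + 2 * b; 3 * b]] ->
  a + 3 * m != 3 * b /\ b + 3 * m != 3 * a.
Proof.
have mod_shift x y : x + 3 * m = y -> y %% m = x %% m.
  by move=> <-; rewrite addnC modnMDl.
move=> residues_uniq; split; apply/eqP => /mod_shift coll; move: residues_uniq;
  by rewrite /= !inE coll eqxx ?orbT ?andbF.
Qed.

Ltac solve_mem :=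
  rewrite !inE; repeat (apply/orP; first [left; apply/eqP; lia | right]); apply/eqP; lia.

Ltac case_mem H :=
  rewrite ?inE in H; repeat case/orP: H => [/eqP ? | H]; try move/eqP: H => ?; subst.

Section ThreeGenerators.

Variables m a b : nat.
Hypothesis a_lb : 3 * m + 1 <= 2 * a.
Hypothesis a_lt_b : a < b.
Hypothesis b_ub : 3 * b <= 5 * m - 1.

Local Notation S := (gsg [:: m; a; b] (4 * m)).

Definition small_elts :=
  [:: 0; m; 2 * m; 3 * m; a; a + m; a + 2 * m; b; b + m; b + 2 * m; 2 * a; a + b; 2 * b].

Definition window_sums :=
  [:: 4 * m; a + 3 * m; b + 3 * m; 2 * a + m; a + b + m; 2 * b + m;
      3 * a; 2 * a + b; a + 2 * b; 3 * b].

Lemma mem_S_small z : z < 4 * m -> S z = (z \in small_elts).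
Proof.
move=> z_lt; rewrite /gsg leqNgt z_lt orbF; apply/idP/idP; last first.
  move=> z_in; apply/rep3P; case_mem z_in;
    [exists 0, 0, 0 | exists 1, 0, 0 | exists 2, 0, 0 | exists 3, 0, 0
    | exists 0, 1, 0 | exists 1, 1, 0 | exists 2, 1, 0 | exists 0, 0, 1
    | exists 1, 0, 1 | exists 2, 0, 1 | exists 0, 2, 0 | exists 0, 1, 1
    | exists 0, 0, 2]; lia.
move/rep3P => [i [j [k z_eq]]].
have jk_le : j + k <= 2.
  rewrite leqNgt; apply/negP => jk_gt.
  have : 3 * a <= (j + k) * a by exact: leq_mul.
  have : (j + k) * a <= j * a + k * b by rewrite mulnDl leq_add2l leq_mul2l ltnW ?orbT.
  lia.
have i_le : i <= 3.
  rewrite leqNgt; apply/negP => i_gt.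
  have : 4 * m <= i * m by exact: leq_mul.
  lia.
move: i_le jk_le z_eq; rewrite /small_elts.
case: j => [|[|[|j]]]; case: k => [|[|[|k]]]; case: i => [|[|[|[|i]]]] => *; subst z.
all: first [exfalso; lia | solve_mem].
Qed.

Lemma S_small_ge_m z : z < 4 * m -> S z -> 0 < z -> m <= z.
Proof. by move=> z_lt; rewrite mem_S_small // /small_elts !inE; lia. Qed.

Ltac sum_with x :=
  apply: (@inD_intro _ _ x); [lia | rewrite mem_S_small /small_elts; [solve_mem | lia] ..].

Lemma mem_P_small z : z < 4 * m -> inP S z = (z \in [:: m; a; b]).
Proof.
move=> z_lt; rewrite /inP; apply/idP/idP => [/and3P [z_gt0 Sz] | gen].
- apply: contraR => not_gen; rewrite !inE in not_gen.
  rewrite mem_S_small // /small_elts in Sz.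
  by case_mem Sz; first [exfalso; lia | sum_with m | sum_with a | sum_with b].
- rewrite !inE in gen; apply/and3P; split.
  + lia.
  + by rewrite mem_S_small // /small_elts; case_mem gen; solve_mem.
  + apply/existsP => -[x /and4P [x_gt0 x_lt Sx Szx]].
    have : m <= x by apply: S_small_ge_m => //; lia.
    have : m <= z - x by apply: S_small_ge_m => //; lia.
    lia.
Qed.

Lemma conductor_S : conductor S (4 * m) = 4 * m.
Proof.
apply: conductor_last_gap; first lia.
by rewrite mem_S_small /small_elts ?inE; lia.
Qed.

Lemma multiplicity_S : multiplicity S (4 * m) = m.
Proof.
apply: multiplicity_least; first lia.
  by rewrite mem_S_small /small_elts; [solve_mem | lia].
move=> z /andP [z_gt0 z_lt]; apply/negP => Sz.
by have := S_small_ge_m z; lia.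
Qed.

Lemma count_S_small : count S (iota 0 (4 * m)) = 13.
Proof.
rewrite (count_iota_mem _ _ _ small_elts) //.
- by move=> z z_range; apply: mem_S_small; lia.
- by rewrite /small_elts /= !inE; repeat (apply/andP; split); lia.
- by rewrite /small_elts /=; lia.
Qed.

Lemma count_P_small : count (inP S) (iota 0 (4 * m)) = 3.
Proof.
rewrite (count_iota_mem _ _ _ [:: m; a; b]) //.
- by move=> z z_range; apply: mem_P_small; lia.
- by rewrite /= !inE; lia.
- by rewrite /=; lia.
Qed.

Hypothesis no_collision_a : a + 3 * m != 3 * b.
Hypothesis no_collision_b : b + 3 * m != 3 * a.

Lemma mem_D_window z : 4 * m <= z < 5 * m -> inD S z = (z \in window_sums).
Proof.
move=> z_range; apply/idP/idP; last first.
  rewrite /window_sums => z_in.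
  by case_mem z_in; first [sum_with m | sum_with a | sum_with b].
case/existsP => -[x _] /and4P [/= x_gt0 x_lt Sx Sy].
have x_small : x < 4 * m.
  rewrite ltnNge; apply/negP => x_big.
  have : m <= z - x by apply: S_small_ge_m => //; lia.
  lia.
have y_small : z - x < 4 * m.
  rewrite ltnNge; apply/negP => y_big.
  have : m <= x by apply: S_small_ge_m => //; lia.
  lia.
rewrite mem_S_small // /small_elts in Sx; rewrite mem_S_small // /small_elts in Sy.
move: Sy; set y := z - x => Sy; have z_eq : z = x + y by rewrite /y; lia.
clearbody y; subst z; rewrite /window_sums.
case_mem Sx; case_mem Sy; first [exfalso; lia | solve_mem].
Qed.

Lemma count_D_window : count (inD S) (iota (4 * m) m) = 10.
Proof.
rewrite (count_iota_mem _ _ _ window_sums) //.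
- by move=> z z_range; apply: mem_D_window; lia.
- by rewrite /window_sums /= !inE; repeat (apply/andP; split); lia.
- by rewrite /window_sums /=; lia.
Qed.

End ThreeGenerators.

Theorem proposition3p1 (m a b : nat) :
  0 < m -> 0 < a -> 0 < b ->
  3 * m + 1 <= 2 * a ->   (* (3m+1)/2 <= a *)
  a < b ->
  3 * b <= 5 * m - 1 ->   (* b <= (5m-1)/3 *)
  uniq [seq x %% m | x <- [:: a; b; 2 * a; a + b; 2 * b; 3 * a;
                             2 * a + b; a + 2 * b; 3 * b]] ->
  conductor (gsg [:: m; a; b] (4 * m)) (4 * m) = 4 * m /\
  W0 (gsg [:: m; a; b] (4 * m)) (4 * m) = (-1)%R.
Proof.
move=> m_gt0 _ _ a_lb a_lt_b b_ub /residues_rule_out_collisions [no_coll_a no_coll_b].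
set S := gsg [:: m; a; b] (4 * m).
have c_eq : conductor S (4 * m) = 4 * m by exact: conductor_S.
have mult_eq : multiplicity S (4 * m) = m by exact: multiplicity_S.
have c_mul : conductor S (4 * m) = 4 * multiplicity S (4 * m) by rewrite c_eq mult_eq.
have mult_gt0 : 0 < multiplicity S (4 * m) by rewrite mult_eq.
split=> //; rewrite /W0 (q_of_conductor_mul _ _ _ mult_gt0 c_mul).
rewrite (rho_of_conductor_mul _ _ _ mult_gt0 c_mul) c_eq mult_eq.
by rewrite count_S_small // count_P_small // count_D_window.
Qed.
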